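(* Let $\Lambda^\circ=p(\varphi(L^\times(0)))\subset T^*T^\circ$ and, for nonempty $\mathfrak I\subset\{1,\dots,n\}$, $\mathfrak I\Lambda^\circ=p(\varphi(\mathfrak I L^\times(0)))$. Then $\Lambda^\circ=\Lambda_\Sigma$ and $\mathfrak I\Lambda^\circ=\sigma_{\mathfrak I}T^\circ\times\sigma_{\mathfrak I}$.
   Context: $M^\times=(\mathbb C^\times)^n$ with coordinates $z_a=r_ae^{i\theta_a}$, $W=z_1\cdots z_n$. $I_{\min}(z)$ = indices with $r_a$ minimal; $L^\times(0)=\{z\in M^\times:W(z)\in\mathbb R_{>0},\ \theta_a=0\ \forall a\notin I_{\min}(z)\}$, and for nonempty $\mathfrak I$, $\mathfrak I L^\times(0)$ is its subset where $I_{\min}(z)=\mathfrak I$. $T=(S^1)^n$, $T^*T\cong T\times\mathbb R^n$, $\varphi:M^\times\to T^*T$, $\varphi(z)=(\theta_1,\dots,\theta_n,r_1^2/2,\dots,r_n^2/2)$. $T^\circ=\{\theta\in T:\sum\theta_a=0\}$, $(\mathfrak t^\circ)^*=\mathbb R^n/\mathbb R(e_1+\cdots+e_n)$ with $\bar e_a$ the images of coordinate vectors, and $p:T^*T\times_TT^\circ=T^\circ\times\mathbb R^n\to T^\circ\times(\mathfrak t^\circ)^*=T^*T^\circ$ the projection (note $\varphi(L^\times(0))\subset T^*T\times_TT^\circ$). $\Sigma$ is the complete fan with cones $\sigma_{\mathfrak I}=\mathrm{Span}_{>0}\{\bar e_a:a\notin\mathfrak I\}$, $\sigma_{\mathfrak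 I}T^\circ=\{\theta\in T^\circ:\theta_a=0\ \forall a\notin\mathfrak I\}$ (the subtorus with Lie algebra $\sigma_{\mathfrak I}^\perp$), and $\Lambda_\Sigma=\bigcup_{\mathfrak I}\sigma_{\mathfrak I}T^\circ\times\sigma_{\mathfrak I}$. *)

From HB Require Import structures.
From mathcomp Require Import all_boot all_order all_algebra.
From mathcomp Require Import complex.
From mathcomp Require Import reals.
Set Implicit Arguments. Unset Strict Implicit. Unset Printing Implicit Defensive.
Import Order.TTheory GRing.Theory Num.Theory.
Local Open Scope ring_scope.

Section Defs.
Variables (R : realType) (n : nat).
Local Notation C := R[i].

(* modulus r = |z| (a real number) and phase e^{i theta} = z/|z| in S^1 ⊂ C *)
Definition radius (z : C) : R := complex.Re `|z|.
Definition phase (z : C) : C := z / `|z|.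

Definition inMx (z : 'I_n -> C) : Prop := forall a, z a != 0.
Definition Wpot (z : 'I_n -> C) : C := \prod_(a < n) z a.

Definition Imin (z : 'I_n -> C) : {set 'I_n} :=
  [set a | [forall b, radius (z a) <= radius (z b)]].

(* L^x(0): W(z) in R_{>0} (0 < w in the order of C means w real positive),
   theta_a = 0 (i.e. phase = 1 in S^1) for a outside I_min(z). *)
Definition Lx0 (z : 'I_n -> C) : Prop :=
  inMx z /\ 0 < Wpot z /\ (forall a, a \notin Imin z -> phase (z a) = 1).

Definition ILx0 (I : {set 'I_n}) (z : 'I_n -> C) : Prop := Lx0 z /\ Imin z = I.

(* T = (S^1)^n, S^1 = unit circle in C; T° = {sum theta_a = 0} = {prod = 1} *)
Definition inT (th : 'I_n -> C) : Prop := forall a, `|th a| = 1.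
Definition inTcirc (th : 'I_n -> C) : Prop := inT th /\ \prod_(a < n) th a = 1.

(* phi : M^x -> T^*T = T x R^n *)
Definition phi (z : 'I_n -> C) : ('I_n -> C) * ('I_n -> R) :=
  (fun a => phase (z a), fun a => radius (z a) ^+ 2 / 2).

(* (t°)^* = R^n / R(e_1+...+e_n): xi and eta represent the same class *)
Definition same_class (xi eta : 'I_n -> R) : Prop :=
  exists c : R, forall a, xi a = eta a + c.

Definition evec (b : 'I_n) : 'I_n -> R := fun a => (a == b)%:R.

Definition in_cone (I : {set 'I_n}) (xi : 'I_n -> R) : Prop :=
  exists c : 'I_n -> R, (forall b, b \notin I -> 0 < c b) /\
    same_class xi (fun a => \sum_(b | b \notin I) c b * evec b a).

Definition sigmaT (I : {set 'I_n}) (th : 'I_n -> C) : Prop :=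
  inTcirc th /\ (forall a, a \notin I -> th a = 1).

Definition in_pphi (A : ('I_n -> C) -> Prop) (th : 'I_n -> C) (xi : 'I_n -> R)
  : Prop :=
  exists z, A z /\ (phi z).1 =1 th /\ same_class (phi z).2 xi.

Definition in_LambdaSigma (th : 'I_n -> C) (xi : 'I_n -> R) : Prop :=
  exists I : {set 'I_n}, I != set0 /\ sigmaT I th /\ in_cone I xi.

End Defs.

(** The moment coordinates of a point of [L^x(0)] are [r_a^2/2]; up to the
    diagonal shift by [r_min^2/2] they are zero exactly on [I_min(z)] and
    positive elsewhere, and the phases are trivial off [I_min(z)].  This gives
    [p(phi(I L^x(0))) ⊂ sigma_I T° × sigma_I].  Conversely, a point
    [(theta, [sum_{a ∉ I} c_a e_a])] with [c_a > 0] and [theta_a = 1] off [I]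
    is hit by [z_a = sqrt(2 (s_a + 1)) theta_a], where [s_a = c_a] off [I] and
    [s_a = 0] on [I]: the moduli are minimal exactly on [I] and
    [W(z) = prod r_a > 0] because [prod theta_a = 1]. *)

From mathcomp Require Import all_boot all_order all_algebra.
From mathcomp Require Import complex reals lra.
Set Implicit Arguments. Unset Strict Implicit. Unset Printing Implicit Defensive.
Import Order.TTheory GRing.Theory Num.Theory.
Local Open Scope ring_scope.
Local Open Scope complex_scope.

Section Lagrangian.
Variables (R : realType) (n : nat).
Local Notation C := R[i].

Lemma radius_ge0 (z : C) : 0 <= radius z.
Proof. by rewrite /radius normc_def /= sqrtr_ge0. Qed.

Lemma cone_sumE (I : {set 'I_n}) (c : 'I_n -> R) a :
  \sum_(b | b \notin I) c b * evec R b a = if a \in I then 0 else c a.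
Proof.
case: ifP => aI.
  apply: big1 => b bI; rewrite /evec; case: eqP => [ab|_]; last by rewrite mulr0.
  by rewrite -ab aI in bI.
rewrite (bigD1 a) ?aI //= /evec eqxx mulr1 big1 ?addr0 // => b /andP[_ ba].
by rewrite eq_sym (negbTE ba) mulr0.
Qed.

Lemma in_cone_same_class (I : {set 'I_n}) (xi eta : 'I_n -> R) :
  in_cone I xi -> same_class xi eta -> in_cone I eta.
Proof.
move=> [c [c_gt0 [d xiE]]] [e etaE]; exists c; split=> //.
by exists (d - e) => a; move: (xiE a) (etaE a); lra.
Qed.

Lemma Imin_neq0 (n_gt0 : (0 < n)%N) (z : 'I_n -> C) : Imin z != set0.
Proof.
case: (@arg_minP _ _ _ (Ordinal n_gt0) xpredT (fun a => radius (z a)) isT).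
move=> a _ amin; apply/set0Pn; exists a; rewrite inE.
by apply/forallP => b; apply: amin.
Qed.

Lemma Imin_radius_eq {z : 'I_n -> C} {a b : 'I_n} :
  a \in Imin z -> b \in Imin z -> radius (z a) = radius (z b).
Proof.
rewrite !inE => /forallP/(_ b) ab /forallP/(_ a) ba.
by apply/le_anti; rewrite ab ba.
Qed.

Lemma Imin_radius_lt {z : 'I_n -> C} {a b : 'I_n} :
  a \in Imin z -> b \notin Imin z -> radius (z a) < radius (z b).
Proof.
rewrite !inE negb_forall => /forallP amin /existsP[b']; rewrite -ltNge.
exact: le_lt_trans (amin b').
Qed.

Lemma in_cone_phi_Imin (n_gt0 : (0 < n)%N) (z : 'I_n -> C) :
  in_cone (Imin z) (phi z).2.
Proof.
have /set0Pn[a0 a0min] := Imin_neq0 n_gt0 z.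
set m := fun a => (phi z).2 a.
exists (fun b => m b - m a0); split.
  move=> b bmin; rewrite /m /= subr_gt0.
  have := Imin_radius_lt a0min bmin; have := radius_ge0 (z a0); nra.
exists (m a0) => a; rewrite cone_sumE.
case: ifP => amin; last by rewrite subrK.
by rewrite add0r /m /= (Imin_radius_eq amin a0min).
Qed.

Lemma Lx0_sigmaT (z : 'I_n -> C) (th : 'I_n -> C) :
  Lx0 z -> (phi z).1 =1 th -> inTcirc th -> sigmaT (Imin z) th.
Proof. by move=> [_ [_ phase1]] thE Tth; split=> // a amin; rewrite -thE /= phase1. Qed.

Definition polar (rho : 'I_n -> R) (th : 'I_n -> C) : 'I_n -> C :=
  fun a => (rho a)%:C * th a.

Section Polar.
Variables (rho : 'I_n -> R) (th : 'I_n -> C).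
Hypotheses (rho_gt0 : forall a, 0 < rho a) (th_unit : inT th).

Lemma norm_polar a : `|polar rho th a| = (rho a)%:C.
Proof. by rewrite normrM th_unit mulr1 ger0_norm // ler0c ltW. Qed.

Lemma radius_polar a : radius (polar rho th a) = rho a.
Proof. by rewrite /radius norm_polar. Qed.

Lemma phase_polar a : phase (polar rho th a) = th a.
Proof.
have rho_neq0 : (rho a)%:C != 0 by rewrite eq_complex /= negb_and gt_eqF.
by rewrite /phase norm_polar /polar mulrC mulrA mulVf ?mul1r.
Qed.

Lemma inMx_polar : inMx (polar rho th).
Proof. by move=> a; rewrite -normr_eq0 norm_polar eq_complex /= negb_and gt_eqF. Qed.

Lemma Wpot_polar_gt0 : \prod_(a < n) th a = 1 -> 0 < Wpot (polar rho th).
Proof.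
rewrite /Wpot /polar big_split /= => ->; rewrite mulr1.
by apply: prodr_gt0 => a _; rewrite ltcE /= eqxx rho_gt0.
Qed.

Lemma Imin_polar : Imin (polar rho th) = [set a | [forall b, rho a <= rho b]].
Proof. by apply/setP => a; rewrite !inE; under eq_forallb do rewrite !radius_polar. Qed.

End Polar.

Lemma cone_moduli {I : {set 'I_n}} {xi : 'I_n -> R} :
  I != set0 -> in_cone I xi ->
  exists rho : 'I_n -> R, [/\ forall a, 0 < rho a,
    [set a | [forall b, rho a <= rho b]] = I &
    same_class (fun a => rho a ^+ 2 / 2) xi].
Proof.
move=> /set0Pn[b0 b0I] [c [c_gt0 [d xiE]]].
set s := fun a => if a \in I then 0 else c a.
have s_ge0 a : 0 <= s a by rewrite /s; case: ifPn => // /c_gt0/ltW.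
have rho2 a : Num.sqrt (2 * (s a + 1)) ^+ 2 = 2 * (s a + 1).
  by rewrite sqr_sqrtr //; have := s_ge0 a; lra.
have ler_rho a b :
    (Num.sqrt (2 * (s a + 1)) <= Num.sqrt (2 * (s b + 1))) = (s a <= s b).
  by rewrite ler_sqrt; [lra | have := s_ge0 b; lra].
exists (fun a => Num.sqrt (2 * (s a + 1))); split.
- by move=> a; rewrite sqrtr_gt0; have := s_ge0 a; lra.
- apply/setP => a; rewrite inE; under eq_forallb do rewrite ler_rho.
  apply/forallP/idP => [amin|aI b]; last by rewrite /s aI s_ge0.
  apply: contraT => aI; have := amin b0; rewrite /s b0I (negbTE aI).
  by have := c_gt0 a aI; lra.
- exists (1 - d) => a; rewrite rho2 xiE cone_sumE -/(s a); lra.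
Qed.

Lemma sigmaT_cone_in_pphi (I : {set 'I_n}) (th : 'I_n -> C) (xi : 'I_n -> R) :
  I != set0 -> sigmaT I th -> in_cone I xi -> in_pphi (ILx0 I) th xi.
Proof.
move=> I_neq0 [[th_unit th_prod] th1].
move=> /(cone_moduli I_neq0)[rho [rho_gt0 rhoI rhoE]].
have IminE : Imin (polar rho th) = I by rewrite Imin_polar.
exists (polar rho th); split; [split=> //; split; [|split] | split].
- exact: inMx_polar.
- exact: Wpot_polar_gt0.
- by move=> a; rewrite IminE phase_polar //; apply: th1.
- by move=> a /=; rewrite phase_polar.
- by case: rhoE => e rhoE; exists e => a /=; rewrite radius_polar.
Qed.

Lemma in_pphi_ILx0 (n_gt0 : (0 < n)%N) (I : {set 'I_n}) (th : 'I_n -> C)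
    (xi : 'I_n -> R) :
  I != set0 -> inTcirc th ->
  in_pphi (ILx0 I) th xi <-> sigmaT I th /\ in_cone I xi.
Proof.
move=> I_neq0 Tth; split; last by case; exact: sigmaT_cone_in_pphi.
move=> [z [[Lz <-] [thE xiE]]]; split; first exact: Lx0_sigmaT.
exact: in_cone_same_class (in_cone_phi_Imin n_gt0 z) xiE.
Qed.

Lemma in_pphi_Lx0 (n_gt0 : (0 < n)%N) (th : 'I_n -> C) (xi : 'I_n -> R) :
  in_pphi (@Lx0 R n) th xi <->
  exists I : {set 'I_n}, I != set0 /\ in_pphi (ILx0 I) th xi.
Proof.
split => [[z [Lz zE]]|[I [_ [z [[Lz _] zE]]]]]; last by exists z.
by exists (Imin z); split; [exact: Imin_neq0 | exists z].
Qed.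

End Lagrangian.

Theorem mainTheorem16 (R : realType) (n : nat) (n_gt0 : (0 < n)%N) :
  (forall (th : 'I_n -> R[i]) (xi : 'I_n -> R), inTcirc th ->
     (in_pphi (@Lx0 R n) th xi <-> in_LambdaSigma th xi)) /\
  (forall I : {set 'I_n}, I != set0 ->
     forall (th : 'I_n -> R[i]) (xi : 'I_n -> R), inTcirc th ->
       (in_pphi (ILx0 I) th xi <-> sigmaT I th /\ in_cone I xi)).
Proof.
split; last by move=> I I_neq0 th xi Tth; exact: in_pphi_ILx0.
move=> th xi Tth; rewrite in_pphi_Lx0 //.
split=> -[I [I_neq0 pphiI]]; exists I; split=> //.
- exact: (in_pphi_ILx0 n_gt0 xi I_neq0 Tth).1 pphiI.
- exact: (in_pphi_ILx0 n_gt0 xi I_neq0 Tth).2 pphiI.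
Qed.
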